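(* Let $e\ge3$ be odd, $m\in\mathbb N$, $t\in\{0,1\}$, and $\mathbf c=(t+(1-e)/2,0)$. Then the vertex $|(\emptyset,1^m),\mathbf c\rangle$ of the crystal graph $\mathcal G_{\mathbf c,e}$ is a highest weight vertex if and only if $e\mid 2m+t$ or $e\mid 2m+t-1$.
   Context: Crystal graph $\mathcal G_{\mathbf c,e}$ for $\mathbf c=(c_1,c_2)\in\mathbb Z^2$: vertices are $|\mu,\mathbf c\rangle$ for all bipartitions $\mu=(\mu^1,\mu^2)$. A node of $\mu$ is $(a,b,j)$ with $(a,b)$ (row $a$, column $b$) in the Young diagram of $\mu^j$; content $b-a+c_j$, residue = content mod $e$. A node $\gamma$ is addable (resp. removable) if $\mu\cup\{\gamma\}$ (resp. $\mu\setminus\{\gamma\}$) is a bipartition. For $i\in\{0,\dots,e-1\}$ order the addable and removable $i$-nodes by $\gamma\prec\gamma'$ iff $\mathrm{cont}(\gamma)<\mathrm{cont}(\gamma')$ or contents equal and $j>j'$; write them in increasing order as a word in $A$ (addable), $R$ (removable), and delete recursively consecutive $RA$, giving $A^\alpha R^\beta$; if $\alpha>0$, the good addable $i$-node is that of the rightmost $A$. Edge $|\mu,\mathbf c\rangle\xrightarrow{i}|\nu,\mathbf c\rangle$ iff $\nu$ is $\mu$ plus its good addable $i$-node. A highest weight vertex is a vertex with no incoming edges. *)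

From mathcomp Require Import all_boot all_order all_algebra.
Set Implicit Arguments. Unset Strict Implicit. Unset Printing Implicit Defensive.
Import GRing.Theory Num.Theory.

Definition is_partition (p : seq nat) : bool :=
  sorted geq p && all (fun x => 0 < x) p.

Definition bipartition := (seq nat * seq nat)%type.
Definition is_bipartition (mu : bipartition) : bool :=
  is_partition mu.1 && is_partition mu.2.

Definition comp (mu : bipartition) (j : nat) : seq nat :=
  if j == 1 then mu.1 else mu.2.

(** A node (a, b, j): row a >= 1, column b >= 1, component j in {1,2}. *)
Definition node := (nat * nat * nat)%type.
Definition nrow (g : node) := g.1.1.
Definition ncol (g : node) := g.1.2.
Definition ncomp (g : node) := g.2.

Definition in_bip (mu : bipartition) (g : node) : bool :=
  [&& (ncomp g == 1) || (ncomp g == 2), 0 < nrow g, 0 < ncol g &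
      ncol g <= nth 0 (comp mu (ncomp g)) (nrow g).-1].

(** gamma is addable: gamma is not in mu and mu u {gamma} is a Young diagram
    (i.e. its upper and left neighbours, when they exist, lie in mu). *)
Definition addable (mu : bipartition) (g : node) : bool :=
  let: (a, b, j) := g in
  [&& (j == 1) || (j == 2), 0 < a, 0 < b, ~~ in_bip mu g,
      (a == 1) || in_bip mu (a.-1, b, j) &
      (b == 1) || in_bip mu (a, b.-1, j)].

(** gamma is removable: gamma is in mu and mu \ {gamma} is a Young diagram
    (i.e. its lower and right neighbours are not in mu). *)
Definition removable (mu : bipartition) (g : node) : bool :=
  let: (a, b, j) := g in
  [&& in_bip mu g, ~~ in_bip mu (a.+1, b, j) & ~~ in_bip mu (a, b.+1, j)].

Definition content (c : int * int) (g : node) : int :=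
  let: (a, b, j) := g in
  (Posz b - Posz a + (if j == 1 then c.1 else c.2))%R.

Definition residue_is (c : int * int) (e i : nat) (g : node) : bool :=
  ((content c g %% Posz e)%Z == Posz i).

(** A finite box containing all addable and removable nodes of mu. *)
Definition candidates (mu : bipartition) : seq node :=
  flatten [seq flatten [seq [seq (a, b, j) | b <- iota 1 (head 0 (comp mu j)).+1]
                         | a <- iota 1 (size (comp mu j)).+1]
          | j <- [:: 1; 2]].

(** Letters of the word: (true, g) is an A (addable), (false, g) an R. *)
Definition letter := (bool * node)%type.

Definition node_le (c : int * int) (g g' : node) : bool :=
  (content c g < content c g')%R ||
  ((content c g == content c g') && (ncomp g' <= ncomp g)).

Definition iword (c : int * int) (e i : nat) (mu : bipartition) : seq letter :=
  sort (fun x y : letter => node_le c x.2 y.2)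
    ([seq (true, g) | g <- candidates mu & addable mu g && residue_is c e i g]
     ++ [seq (false, g) | g <- candidates mu & removable mu g && residue_is c e i g]).

Fixpoint delete_RA (w : seq letter) : seq letter :=
  match w with
  | (false, g) :: (true, g') :: w' => w'
  | x :: w' => x :: delete_RA w'
  | [::] => [::]
  end.

(** Delete recursively consecutive R A (size w iterations suffice). *)
Definition reduce_word (w : seq letter) : seq letter := iter (size w) delete_RA w.

Definition good_addable (c : int * int) (e i : nat) (mu : bipartition) : option node :=
  let As := [seq x.2 | x <- reduce_word (iword c e i mu) & x.1] in
  if As is [::] then None else Some (last (head (0,0,0) As) As).

Definition crystal_edge (c : int * int) (e i : nat) (lam nu : bipartition) : Prop :=
  [/\ is_bipartition lam, is_bipartition nu &
      exists g, good_addable c e i lam = Some g /\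
                forall x, in_bip nu x = (x == g) || in_bip lam x].

Definition highest_weight (c : int * int) (e : nat) (mu : bipartition) : Prop :=
  is_bipartition mu /\
  forall (lam : bipartition) (i : nat), i < e -> ~ crystal_edge c e i lam mu.

From Pilot Require Import Defs.
From mathcomp Require Import all_boot all_order all_algebra zify.
Set Implicit Arguments. Unset Strict Implicit. Unset Printing Implicit Defensive.
Import GRing.Theory Num.Theory.

(* The only possible edge into |(∅, 1^m)> comes from (∅, 1^(m-1)) and adds its bottom node
   g = (m, 1, 2) of content c_2 - (m - 1).  The only removable node of (∅, 1^(m-1)) sits just
   above g and has content one more, so no removable node shares the residue of g, and g is good
   exactly when no other addable node of its residue comes after it.  The other addable nodes are
   (1, 1, 1), of content c_1, and (1, 2, 2), of content c_2 + 1; they share the residue of g iff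
   e | c_1 - c_2 + m - 1, resp. e | m, and then they do come after g provided c_1 - c_2 > -e.
   For c_1 = t + (1 - e)/2 and odd e, doubling turns these conditions into e | 2m + t or
   e | 2m + t - 1. *)

Lemma delete_RA_subset w : {subset delete_RA w <= w}.
Proof.
elim: w => [|[[] x] w IH] y //=; first by rewrite !inE => /predU1P[->|/IH->];
  rewrite ?eqxx ?orbT.
case: w IH => [|[[] x'] w] IH //=; rewrite !inE.
  by move=> ->; rewrite !orbT.
by move=> /predU1P[->|/IH]; rewrite ?eqxx // !inE => ->; rewrite orbT.
Qed.

Lemma reduce_word_subset w : {subset reduce_word w <= w}.
Proof. rewrite /reduce_word; elim: (size w) => //= n IH y /delete_RA_subset; exact: IH. Qed.

Lemma reduce_word_addable w : all fst w -> reduce_word w = w.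
Proof.
have delete_RA_id : all fst w -> delete_RA w = w.
  by elim: w => //= -[[] x] w IH /andP[//= _ /IH ->].
by move=> wA; rewrite /reduce_word; elim: (size w) => //= n ->; rewrite delete_RA_id.
Qed.

Lemma node_le_refl c : reflexive (node_le c).
Proof. by move=> x; rewrite /node_le eqxx leqnn orbT. Qed.

Lemma node_le_trans c : transitive (node_le c).
Proof. move=> y x z; rewrite /node_le; lia. Qed.

Lemma node_le_total c : total (node_le c).
Proof. move=> x y; have := leq_total (ncomp x) (ncomp y); rewrite /node_le; lia. Qed.

Lemma sorted_le_last (T : eqType) (r : rel T) x0 s y :
  transitive r -> reflexive r -> sorted r s -> y \in s -> r y (last x0 s).
Proof.
move=> r_tr r_refl s_sorted ys; have lt_ys : index y s < size s by rewrite index_mem.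
rewrite -nth_last -[y in r y](nth_index x0 ys).
by apply: sorted_leq_nth => //; rewrite ?inE /=; lia.
Qed.

Section Word.
Variables (c : int * int) (e i : nat) (mu : bipartition).

Lemma mem_iword_addable g :
  (true, g) \in iword c e i mu -> addable mu g && residue_is c e i g.
Proof.
by rewrite mem_sort mem_cat => /orP[] /mapP[x]; rewrite mem_filter => /andP[xP _] // [->].
Qed.

Lemma mem_iword_removable g :
  (false, g) \in iword c e i mu -> removable mu g && residue_is c e i g.
Proof.
by rewrite mem_sort mem_cat => /orP[] /mapP[x]; rewrite mem_filter => /andP[xP _] // [->].
Qed.

Lemma addable_mem_iword g : g \in candidates mu -> addable mu g -> residue_is c e i g ->
  (true, g) \in iword c e i mu.
Proof. by move=> gC gA gi; rewrite mem_sort mem_cat map_f // mem_filter gA gi. Qed.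

Lemma good_addable_mem_iword g :
  good_addable c e i mu = Some g -> (true, g) \in iword c e i mu.
Proof.
rewrite /good_addable; case Es: [seq _ | _ <- _ & _] => [//|y s] [<-].
have : last y s \in y :: s by exact: mem_last.
by rewrite -Es => /mapP[[b x]]; rewrite mem_filter /= => /andP[-> /reduce_word_subset ?] ->.
Qed.

Hypothesis no_removable : forall x, (false, x) \notin iword c e i mu.

Lemma good_addable_no_removable :
  good_addable c e i mu =
  if [seq x.2 | x <- iword c e i mu] is y :: s then Some (last y s) else None.
Proof.
have wA : all fst (iword c e i mu).
  by apply/allP => -[[] x] //= xw; move: (no_removable x); rewrite xw.
rewrite /good_addable reduce_word_addable //.
have -> : [seq x <- iword c e i mu | x.1] = iword c e i mu by exact/all_filterP.
by case: [seq _ | _ <- _].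
Qed.

Lemma good_addable_unique g : (true, g) \in iword c e i mu ->
  (forall x, (true, x) \in iword c e i mu -> x = g) -> good_addable c e i mu = Some g.
Proof.
rewrite good_addable_no_removable => gw onlyg.
case Es: [seq _ | _ <- _] => [|y s]; first by move: (map_f snd gw); rewrite Es.
have : last y s \in y :: s by exact: mem_last.
rewrite -Es => /mapP[[[] x] xw ->] /=; first by rewrite (onlyg x xw).
by have := no_removable x; rewrite xw.
Qed.

Lemma good_addable_max g y : good_addable c e i mu = Some g ->
  (true, y) \in iword c e i mu -> node_le c y g.
Proof.
rewrite good_addable_no_removable => + yw.
have : sorted (node_le c) [seq x.2 | x <- iword c e i mu].
  by rewrite sorted_map; apply/sort_sorted => x z; apply: node_le_total.
move: (map_f snd yw); case: [seq _ | _ <- _] => [//|z s] ys s_sorted [<-].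
exact: (sorted_le_last z (@node_le_trans c) (@node_le_refl c) s_sorted ys).
Qed.

End Word.

Lemma partition_nth_gt0 p k : is_partition p -> (0 < nth 0 p k) = (k < size p).
Proof.
case/andP=> _ /allP p_pos; case: (ltnP k (size p)) => [kp | pk]; last by rewrite nth_default.
exact: p_pos (mem_nth 0 kp).
Qed.

Lemma partition_nth_le p k l : is_partition p -> k <= l -> nth 0 p l <= nth 0 p k.
Proof.
case/andP=> p_sorted _ kl; case: (ltnP l (size p)) => [lp | pl]; last by rewrite nth_default.
have geq_trans : transitive geq by move=> n m o /= mn nm; apply: leq_trans nm mn.
by apply: (sorted_leq_nth geq_trans leqnn 0 p_sorted); rewrite ?inE /=; lia.
Qed.

Lemma partition_eq p q : is_partition p -> is_partition q -> nth 0 p =1 nth 0 q -> p = q.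
Proof.
move=> pP qP pq; have size_pq k : (k < size p) = (k < size q).
  by rewrite -(partition_nth_gt0 _ pP) -(partition_nth_gt0 _ qP) pq.
apply: (eq_from_nth (x0 := 0)) => [|k _]; last exact: pq.
by have := size_pq (size p); have := size_pq (size q); rewrite !ltnn; lia.
Qed.

Lemma is_partition_comp mu j : is_bipartition mu -> is_partition (Defs.comp mu j).
Proof. by case/andP; rewrite /Defs.comp; case: ifP. Qed.

Lemma bipartition_eq lam mu :
  is_bipartition lam -> is_bipartition mu -> in_bip lam =1 in_bip mu -> lam = mu.
Proof.
move=> lamP muP same.
have comp_eq j : (j == 1) || (j == 2) -> Defs.comp lam j = Defs.comp mu j.
  move=> jP; apply: partition_eq; rewrite ?is_partition_comp // => k.
  have := same (k.+1, nth 0 (Defs.comp lam j) k, j).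
  have := same (k.+1, nth 0 (Defs.comp mu j) k, j).
  rewrite /in_bip /nrow /ncol /ncomp /= jP /=; lia.
case: lam mu comp_eq {same lamP muP} => [p1 p2] [q1 q2] eq_j.
by have := eq_j 1 isT; have := eq_j 2 isT; rewrite /Defs.comp /= => -> ->.
Qed.

Lemma in_bip_up mu a b j :
  is_bipartition mu -> 0 < a -> in_bip mu (a.+1, b, j) -> in_bip mu (a, b, j).
Proof.
move=> muP a_gt0; have := partition_nth_le (is_partition_comp j muP) (leq_pred a).
rewrite /in_bip /nrow /ncol /ncomp /=; lia.
Qed.

Lemma mem_candidates mu a b j : (j == 1) || (j == 2) ->
  0 < a <= (size (Defs.comp mu j)).+1 -> 0 < b <= (head 0 (Defs.comp mu j)).+1 ->
  (a, b, j) \in candidates mu.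
Proof.
move=> jP aP bP; apply/flatten_mapP; exists j; first by rewrite !inE.
apply/flatten_mapP; exists a; first by rewrite mem_iota; lia.
by apply/mapP; exists b; rewrite // mem_iota; lia.
Qed.

Definition column (n : nat) : bipartition := ([::], nseq n 1).

Lemma is_bipartition_column n : is_bipartition (column n).
Proof.
rewrite /is_bipartition /is_partition /=; apply/andP; split; last by apply/allP => x /nseqP[->].
by elim: n => // -[|n] //= ->.
Qed.

Lemma in_bip_column n a b j :
  in_bip (column n) (a, b, j) = [&& j == 2, b == 1, 0 < a & a <= n].
Proof.
rewrite /in_bip /Defs.comp /nrow /ncol /ncomp /=.
by case: (j =P 1) => [->|_]; rewrite ?nth_nil ?nth_nseq; [|case: ifP]; lia.
Qed.

Lemma addable_column n a b j : addable (column n) (a, b, j) ->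
  [|| (a, b, j) == (1, 1, 1), (a, b, j) == (n.+1, 1, 2) | (0 < n) && ((a, b, j) == (1, 2, 2))].
Proof. rewrite /addable !in_bip_column !xpair_eqE; lia. Qed.

Lemma removable_column n a b j : removable (column n) (a, b, j) -> (a, b, j) = (n, 1, 2).
Proof. by rewrite /removable !in_bip_column => H; apply/eqP; rewrite !xpair_eqE; lia. Qed.

Lemma column_remove_node m lam g : is_bipartition lam -> ~~ in_bip lam g ->
    (forall x, in_bip (column m) x = (x == g) || in_bip lam x) ->
  exists n, [/\ m = n.+1, g = (n.+1, 1, 2) & lam = column n].
Proof.
move=> lamP g_lam diagram; have : in_bip (column m) g by rewrite diagram eqxx.
case: g g_lam diagram => [[a b] j] g_lam diagram.
rewrite in_bip_column => /and4P[/eqP j2 /eqP b1 a_gt0 a_le_m]; subst j b.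
have a_eq_m : a = m.
  apply/eqP; rewrite eqn_leq a_le_m leqNgt; apply: contra g_lam => a_lt_m.
  apply: in_bip_up => //; move: (diagram (a.+1, 1, 2)).
  by rewrite in_bip_column !xpair_eqE /=; lia.
subst a; case: m a_gt0 {a_le_m} g_lam diagram => // n _ g_lam diagram; exists n; split => //.
apply: bipartition_eq; rewrite ?is_bipartition_column // => x.
have := diagram x; case: eqP => [-> _ | /eqP + /= <-].
  by rewrite (negbTE g_lam) in_bip_column ltnn !andbF.
by case: x => [[a b] j]; rewrite !in_bip_column !xpair_eqE; lia.
Qed.

Lemma residue_is_congr c e i x y : residue_is c e i x ->
  residue_is c e i y = (Posz e %| (content c y - content c x)%R)%Z.
Proof. by move=> /eqP xi; rewrite -eqz_mod_dvd /residue_is xi. Qed.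

Lemma exists_residue c e g : 0 < e -> exists2 i, i < e & residue_is c e i g.
Proof. by move=> e_gt0; exists `|(content c g %% Posz e)%Z|%N; rewrite /residue_is; lia. Qed.

Lemma edge_into_column c e i lam m : crystal_edge c e i lam (column m) ->
  exists n, [/\ m = n.+1, lam = column n & good_addable c e i (column n) = Some (n.+1, 1, 2)].
Proof.
case=> lamP _ [g [g_good diagram]].
have /andP[gA _] := mem_iword_addable (good_addable_mem_iword g_good).
have g_lam : ~~ in_bip lam g by case: g gA {g_good diagram} => [[a b] j] /and5P[].
by have [n [-> eq_g eq_lam]] := column_remove_node lamP g_lam diagram; exists n; subst.
Qed.

Lemma edge_column_succ c e i n : good_addable c e i (column n) = Some (n.+1, 1, 2) ->
  crystal_edge c e i (column n) (column n.+1).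
Proof.
move=> g_good; split; rewrite ?is_bipartition_column //; exists (n.+1, 1, 2); split => //.
by move=> [[a b] j]; rewrite !in_bip_column !xpair_eqE; lia.
Qed.

Lemma highest_weight_column0 c e : highest_weight c e (column 0).
Proof. by split=> [|lam i _ /edge_into_column[n []]]; first exact: is_bipartition_column. Qed.

Lemma highest_weight_column_succ c e n : highest_weight c e (column n.+1) <->
  forall i, i < e -> residue_is c e i (n.+1, 1, 2) ->
    good_addable c e i (column n) <> Some (n.+1, 1, 2).
Proof.
split=> [[_ no_edge] i ie _ g_good | not_good].
  exact: no_edge (column n) i ie (edge_column_succ g_good).
split=> [|lam i ie /edge_into_column[_ [[<-] _ g_good]]]; first exact: is_bipartition_column.
have /andP[_ gi] := mem_iword_addable (good_addable_mem_iword g_good).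
exact: not_good i ie gi g_good.
Qed.

Section ColumnWord.
Variables (c : int * int) (e i n : nat).
Hypotheses (e_gt1 : 1 < e) (gi : residue_is c e i (n.+1, 1, 2)).

Lemma column_no_removable x : (false, x) \notin iword c e i (column n).
Proof.
apply/negP=> /mem_iword_removable/andP[]; case: x => [[a b] j] /removable_column[-> -> ->].
rewrite (residue_is_congr _ gi) /= (_ : (_ - _)%R = 1%R); first by rewrite dvdz1; lia.
lia.
Qed.

Lemma residue_is_column_top : residue_is c e i (1, 2, 2) = (Posz e %| Posz n.+1)%Z.
Proof. by rewrite (residue_is_congr _ gi) /= (_ : (_ - _)%R = Posz n.+1) //; lia. Qed.

Lemma residue_is_column_corner :
  residue_is c e i (1, 1, 1) = (Posz e %| (c.1 - c.2 + Posz n)%R)%Z.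
Proof.
by rewrite (residue_is_congr _ gi) /= (_ : (_ - _)%R = (c.1 - c.2 + Posz n)%R) //; lia.
Qed.

Lemma good_addable_column_bottom :
  ~~ (Posz e %| Posz n.+1)%Z -> ~~ (Posz e %| (c.1 - c.2 + Posz n)%R)%Z ->
  good_addable c e i (column n) = Some (n.+1, 1, 2).
Proof.
move=> top corner; apply: (good_addable_unique column_no_removable).
  apply: addable_mem_iword gi; first by apply: mem_candidates; rewrite //= size_nseq.
  by rewrite /addable /= !in_bip_column; lia.
move=> [[a b] j] /mem_iword_addable/andP[/addable_column].
case/or3P=> [/eqP[-> -> ->] | /eqP[-> -> ->] // | /andP[_ /eqP[-> -> ->]]].
  by rewrite residue_is_column_corner (negbTE corner).
by rewrite residue_is_column_top (negbTE top).
Qed.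

Lemma good_addable_column_not_bottom : (- Posz e < c.1 - c.2)%R ->
  (Posz e %| Posz n.+1)%Z || (Posz e %| (c.1 - c.2 + Posz n)%R)%Z ->
  good_addable c e i (column n) <> Some (n.+1, 1, 2).
Proof.
move=> c_gt /orP[top | corner] g_good.
  have n_gt0 : 0 < n by move: top; rewrite dvdzE /= => /dvdn_leq; lia.
  have topw : (true, (1, 2, 2)) \in iword c e i (column n).
    apply: addable_mem_iword; last by rewrite residue_is_column_top.
      by apply: mem_candidates; rewrite //= -(prednK n_gt0).
    by rewrite /addable /= !in_bip_column; lia.
  by have := good_addable_max column_no_removable g_good topw; rewrite /node_le /=; lia.
have cornerw : (true, (1, 1, 1)) \in iword c e i (column n).
  apply: addable_mem_iword; last by rewrite residue_is_column_corner.
    exact: mem_candidates.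
  by rewrite /addable /= ?in_bip_column.
have := good_addable_max column_no_removable g_good cornerw; rewrite /node_le /= ltnn andbF orbF.
(* c.1 - c.2 + n is a multiple of e greater than -e, hence nonnegative. *)
case/dvdzP: corner => q corner_eq; have [q_lt0 | q_ge0] : (q < 0 \/ 0 <= q)%R by lia.
  have : (q * Posz e <= - Posz e)%R by nia.
  lia.
nia.
Qed.

End ColumnWord.

Lemma highest_weight_columnP c e m : 1 < e -> (- Posz e < c.1 - c.2)%R ->
  highest_weight c e (column m) <->
  (Posz e %| Posz m)%Z \/ (Posz e %| (c.1 - c.2 + Posz m - 1)%R)%Z.
Proof.
move=> e_gt1 c_gt; case: m => [|n].
  by split=> [_|_]; [left | exact: highest_weight_column0].
rewrite highest_weight_column_succ.
rewrite (_ : (_ + Posz n.+1 - 1)%R = (c.1 - c.2 + Posz n)%R); last by lia.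
split=> [not_good | top_or_corner i _ gi].
  have [i ie gi] := exists_residue c (n.+1, 1, 2) (ltnW e_gt1).
  apply/orP; apply: contraPT (not_good i ie gi) => /norP[top corner]; apply.
  exact: good_addable_column_bottom.
apply: (good_addable_column_not_bottom e_gt1 gi c_gt).
by case: top_or_corner => ->; rewrite ?orbT.
Qed.

Theorem proposition7p5 (e m t : nat) :
  3 <= e -> odd e -> t <= 1 ->
  highest_weight (Posz t + ((1 - Posz e) %/ 2)%Z, 0)%R e ([::], nseq m 1)
  <-> ((Posz e %| Posz (2 * m + t))%Z \/ (Posz e %| (Posz (2 * m + t) - 1)%R)%Z).
Proof.
move=> e_ge3 e_odd t_le1.
set h := ((1 - Posz e) %/ 2)%Z.
have h_double : (h * 2 = 1 - Posz e)%R.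
  by rewrite divzK // dvdzE /= -(odd_double_half e) e_odd; lia.
rewrite (highest_weight_columnP m) /=; [|lia|lia].
have double (x : int) : (Posz e %| x)%Z = (Posz e %| (x * 2)%R)%Z.
  by rewrite Gauss_dvdzl // coprimezE coprimen2.
rewrite (double (Posz m)) (double (_ - 1)%R).
(* h * 2 = 1 - e, so doubling the corner condition gives e | 2m + 2t - 1 - e. *)
have -> : ((Posz t + h - 0 + Posz m - 1) * 2 = Posz (2 * m + 2 * t) - 1 - Posz e)%R by lia.
rewrite rpredBr ?dvdzz // (_ : (Posz m * 2)%R = Posz (2 * m)); last lia.
case: t t_le1 {h_double} => [|[|//]] _ /=; first by rewrite !addn0.
rewrite (_ : (Posz (2 * m + 1) - 1)%R = Posz (2 * m)); last lia.
rewrite (_ : (Posz (2 * m + 2) - 1)%R = Posz (2 * m + 1)); last lia.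
exact: or_comm.
Qed.
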